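(* Let $\Gamma$ be a finite graph with vertex set $\{1,\dots,n\}$ and $c$ an acyclic orientation of $\Gamma$. For an equivalence class $u$ of $c$-admissible sequences, let $\phi(u)$ be the function on vertices with $\phi(u)_x$ equal to the number of occurrences of $x$ in any representative of $u$. Then the map $\phi$ from the set $\mathfrak{S}_c$ of equivalence classes of $c$-admissible sequences to integer-valued functions on the vertices is injective.
   Context: For an acyclic orientation $c$ of $\Gamma$ and a sink $x$ of $(\Gamma,c)$, $s_xcs_x$ denotes the orientation obtained by reversing all edges coming into $x$. A sequence $x_1,\dots,x_N$ of vertices is $c$-admissible if $x_1$ is a sink of $(\Gamma,c)$, $x_2$ is a sink of $(\Gamma, s_{x_1}cs_{x_1})$, $x_3$ is a sink of $(\Gamma, s_{x_2}s_{x_1}cs_{x_1}s_{x_2})$, and so on. Two admissible sequences are equivalent if one can be obtained from the other by repeatedly interchanging adjacent entries which are non-adjacent vertices of $\Gamma$ (this preserves admissibility and the number of occurrences of each vertex); $\mathfrak{S}_c$ is the set of equivalence classes. *)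

From mathcomp Require Import all_boot.
Set Implicit Arguments. Unset Strict Implicit. Unset Printing Implicit Defensive.

Definition simple_graph (n : nat) (e : rel 'I_n) : Prop :=
  (forall x, ~~ e x x) /\ (forall x y, e x y = e y x).

(* An orientation c of e: o x y means the edge {x,y} is oriented x -> y. *)
Definition orientation (n : nat) (e : rel 'I_n) (o : rel 'I_n) : Prop :=
  (forall x y, o x y -> e x y) /\
  (forall x y, e x y -> (o x y && ~~ o y x) || (o y x && ~~ o x y)).

Definition acyclic_or (n : nat) (o : rel 'I_n) : Prop :=
  forall (x : 'I_n) (p : seq 'I_n), ~ (path o x p /\ o (last x p) x).

Definition is_sink (n : nat) (o : rel 'I_n) (x : 'I_n) : bool :=
  [forall y, ~~ o x y].

(* s_x c s_x : reverse all edges coming into x. *)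
Definition flip (n : nat) (o : rel 'I_n) (x : 'I_n) : rel 'I_n :=
  fun a b => (o a b && (b != x)) || ((a == x) && o b a).

Fixpoint admissible (n : nat) (o : rel 'I_n) (s : seq 'I_n) : bool :=
  match s with
  | [::] => true
  | x :: s' => is_sink o x && admissible (flip o x) s'
  end.

Definition swap_step (n : nat) (e : rel 'I_n) (s t : seq 'I_n) : Prop :=
  exists (s1 s2 : seq 'I_n) (a b : 'I_n),
    ~~ e a b /\ s = s1 ++ a :: b :: s2 /\ t = s1 ++ b :: a :: s2.

(* Equivalence of sequences: reflexive-transitive closure of swap_step
   (swap_step is symmetric, so this is an equivalence relation). *)
Inductive seq_equiv (n : nat) (e : rel 'I_n) : seq 'I_n -> seq 'I_n -> Prop :=
  | seq_equiv_refl s : seq_equiv e s s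
  | seq_equiv_step s t u : swap_step e s t -> seq_equiv e t u -> seq_equiv e s u.

From mathcomp Require Import all_boot zify.
Set Implicit Arguments. Unset Strict Implicit.

(* Induct on the first sequence s = x :: s'.  Since x is a sink of c, every
   edge at x points into x, and reversing the edges into other vertices never
   changes that; so in an admissible t the vertices before the first x are all
   non-adjacent to x (none of them could have been a sink otherwise).  Hence x
   can be moved to the front of t by swaps with non-neighbours, the result is
   still admissible, and the induction hypothesis applies to the tails with
   respect to s_x c s_x. *)

Section Flip.
Variable n : nat.
Implicit Types (o : rel 'I_n) (x : 'I_n).

Lemma eq_flip o o' x : o =2 o' -> flip o x =2 flip o' x.
Proof. by move=> eq_o u v; rewrite /flip !eq_o. Qed.

Lemma eq_is_sink o o' x : o =2 o' -> is_sink o x = is_sink o' x.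
Proof. by move=> eq_o; apply: eq_forallb => y; rewrite eq_o. Qed.

Lemma eq_admissible o o' s : o =2 o' -> admissible o s = admissible o' s.
Proof.
elim: s o o' => [//|x s IHs] o o' eq_o /=.
by rewrite (eq_is_sink x eq_o) (IHs _ _ (eq_flip x eq_o)).
Qed.

Lemma flipC o a b : a != b -> ~~ o a b -> ~~ o b a ->
  flip (flip o a) b =2 flip (flip o b) a.
Proof.
move=> neq_ab /negbTE oab /negbTE oba u v; rewrite /flip.
have [->|] := eqVneq u a; have [->|] := eqVneq v a; have [|] := eqVneq u b;
  have [|] := eqVneq v b => //= *; subst;
  rewrite ?eqxx ?oab ?oba ?(negbTE neq_ab) 1?eq_sym ?(negbTE neq_ab) /=
    ?andbT ?andbF ?orbF //.
Qed.

End Flip.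

Section Admissible.
Variables (n : nat) (e : rel 'I_n).
Hypothesis e_sym : symmetric e.
Implicit Types (o : rel 'I_n) (x y : 'I_n) (s t : seq 'I_n).

(* The part of [orientation] that survives reversing the edges into a vertex. *)
Definition orients o :=
  (forall u v, o u v -> e u v) /\ (forall u v, e u v -> o u v || o v u).

Definition points_into o x := forall y, e x y -> o y x.

Lemma orientation_orients o : orientation e o -> orients o.
Proof.
case=> o_sub o_tot; split=> // u v /o_tot.
by case/orP=> /andP[-> _]; rewrite ?orbT.
Qed.

Lemma flip_orients o x : orients o -> orients (flip o x).
Proof.
case=> o_sub o_tot; split=> u v; rewrite /flip.
  by case/orP=> [/andP[/o_sub //] | /andP[_ /o_sub]]; rewrite e_sym.
move/o_tot; have [->|_] := eqVneq u x; have [->|_] := eqVneq v x;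
  by rewrite ?eqxx ?andbT ?andbF ?orbF ?orbT //= orbC.
Qed.

Lemma sink_points_into o x : orients o -> is_sink o x -> points_into o x.
Proof.
case=> _ o_tot /forallP x_sink y /o_tot.
by rewrite (negbTE (x_sink y)).
Qed.

Lemma flip_points_into o x z : z != x -> points_into o x ->
  points_into (flip o z) x.
Proof. by move=> neq_zx into_x y /into_x oyx; rewrite /flip oyx eq_sym neq_zx. Qed.

Lemma admissible_prefix_nonadj o x t1 t2 :
  points_into o x -> x \notin t1 -> admissible o (t1 ++ t2) ->
  {in t1, forall y, ~~ e x y}.
Proof.
elim: t1 o => [//|z t1 IHt1] o into_x /=.
rewrite in_cons negb_or => /andP[neq_xz xNt1] /andP[/forallP z_sink adm] y.
rewrite in_cons => /orP[/eqP -> | yt1].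
  by apply/negP => /into_x ozx; move: (z_sink x); rewrite ozx.
by apply: (IHt1 (flip o z)) yt1 => //; apply: flip_points_into into_x; rewrite eq_sym.
Qed.

Lemma admissible_move_front o x t1 t2 : orients o -> x \notin t1 ->
  {in t1, forall y, ~~ e x y} ->
  admissible o (t1 ++ x :: t2) -> admissible o (x :: t1 ++ t2).
Proof.
elim: t1 o => [//|y t1 IHt1] o o_or /=.
rewrite in_cons negb_or => /andP[neq_xy xNt1] nadj.
have /negP exy : ~~ e x y by apply: nadj; rewrite in_cons eqxx.
have oxy : ~~ o x y by apply/negP => /o_or.1.
have oyx : ~~ o y x by apply/negP => /o_or.1; rewrite e_sym.
have nadj_t1 : {in t1, forall z, ~~ e x z}.
  by move=> z zt1; apply: nadj; rewrite in_cons zt1 orbT.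
case/andP=> y_sink /(IHt1 _ (flip_orients y o_or) xNt1 nadj_t1) /=.
case/andP=> x_sink adm; apply/and3P; split.
- apply/forallP => v; move/forallP: x_sink => /(_ v).
  rewrite /flip (negbTE neq_xy) /= orbF.
  by have [->|_] := eqVneq v y; rewrite ?(negbTE oxy) ?andbT.
- apply/forallP => v; rewrite /flip (eq_sym y) (negbTE neq_xy) /= orbF.
  by move/forallP: y_sink => /(_ v) /negbTE ->.
- by rewrite (eq_admissible _ (flipC neq_xy oxy oyx)).
Qed.

Lemma seq_equiv_trans s t u : seq_equiv e s t -> seq_equiv e t u -> seq_equiv e s u.
Proof. by elim=> // s0 t0 u0 st _ IH /IH; apply: seq_equiv_step. Qed.

Lemma seq_equiv_cons y s t : seq_equiv e s t -> seq_equiv e (y :: s) (y :: t).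
Proof.
elim=> [s0|s0 t0 u0 [s1 [s2 [a [b [nab [-> ->]]]]]] _ IH].
  exact: seq_equiv_refl.
by apply: seq_equiv_step IH; exists (y :: s1), s2, a, b.
Qed.

Lemma seq_equiv_move_front x t1 t2 : {in t1, forall y, ~~ e x y} ->
  seq_equiv e (x :: t1 ++ t2) (t1 ++ x :: t2).
Proof.
elim: t1 => [|y t1 IHt1] nadj /=; first exact: seq_equiv_refl.
apply: (seq_equiv_step (t := y :: x :: t1 ++ t2)).
  by exists [::], (t1 ++ t2), x, y; split=> //; apply: nadj; rewrite in_cons eqxx.
by apply/seq_equiv_cons/IHt1 => z zt1; apply: nadj; rewrite in_cons zt1 orbT.
Qed.

Lemma admissible_count_equiv o s t : orients o ->
  admissible o s -> admissible o t ->
  (forall x, count_mem x s = count_mem x t) -> seq_equiv e s t.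
Proof.
elim: s o t => [|x s IHs] o t o_or adm_s adm_t cnt.
  case: t cnt {adm_t} => [|y t] cnt; first exact: seq_equiv_refl.
  by move: (cnt y); rewrite /= eqxx.
have xt : x \in t by rewrite -has_pred1 has_count -cnt /= eqxx.
set t1 := take (index x t) t; set t2 := drop (index x t).+1 t.
have tE : t = t1 ++ x :: t2 by rewrite -drop_index // cat_take_drop.
have xNt1 : x \notin t1 by rewrite in_take // ltnn.
case/andP: adm_s => x_sink adm_s; rewrite tE in adm_t cnt.
have nadj := admissible_prefix_nonadj (sink_points_into o_or x_sink) xNt1 adm_t.
case/andP: (admissible_move_front o_or xNt1 nadj adm_t) => _ adm_t'.
rewrite tE; apply: seq_equiv_trans (seq_equiv_move_front t2 nadj).
apply/seq_equiv_cons/(IHs (flip o x)) => // [|z]; first exact: flip_orients.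
by move: (cnt z); rewrite /= !count_cat /=; lia.
Qed.

End Admissible.

Theorem corollary6 (n : nat) (e : rel 'I_n) (c : rel 'I_n) :
  simple_graph e -> orientation e c -> acyclic_or c ->
  forall s t : seq 'I_n,
    admissible c s -> admissible c t ->
    (forall x : 'I_n, count_mem x s = count_mem x t) ->
    seq_equiv e s t.
Proof.
move=> [_ e_sym] /orientation_orients c_or _ s t.
exact: (@admissible_count_equiv n e e_sym c s t c_or).
Qed.
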